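(* Let $(g,n)\neq(0,1),(0,2)$ with $g\ge0,n\ge1$, and write $\vec P_{g,n}(\mu_1,\ldots,\mu_n)=\sum_{a_1,\ldots,a_n\ge0}C_{g,n}(a_1,\ldots,a_n)\mu_1^{a_1}\cdots\mu_n^{a_n}$ (finite sum). Then, substituting $x_i=\frac{z_i-1}{z_i^2}$, \[ F_{g,n}=\sum_{a_1,\ldots,a_n}C_{g,n}(a_1,\ldots,a_n)\prod_{i=1}^nf_{a_i}(z_i). \] In particular $F_{g,n}$ is (the expansion of) a symmetric rational function of $z_1,\ldots,z_n$ with poles only at $z_i=2$, $i=1,\ldots,n$.
   Context: Monotone Hurwitz numbers $\vec H_{g,n}(\mu_1,\ldots,\mu_n)$: with $|\boldsymbol\mu|=\sum\mu_i$ and $m=2g-2+n+|\boldsymbol\mu|$, it is $\frac{1}{|\boldsymbol\mu|!}$ times the number of $m$-tuples of transpositions $(\sigma_1,\ldots,\sigma_m)$ in $S_{|\boldsymbol\mu|}$, with a labelling of the cycles of $\sigma_1\circ\cdots\circ\sigma_m$ by $1,\ldots,n$ so that cycle $i$ has length $\mu_i$, such that the $\sigma_j$ generate a transitive subgroup and, writing $\sigma_j=(a_j\,b_j)$ with $a_j<b_j$, $b_1\le\cdots\le b_m$. Free energy $F_{g,n}(x_1,\ldots,x_n)=\sum_{\mu_i\ge1}\vec H_{g,n}(\boldsymbol\mu)\prod x_i^{\mu_i}$. Known polynomiality (Goulden–Guay-Paquet–Novak): $\vec H_{g,n}(\boldsymbol\mu)=\prod_i\binom{2\mu_i}{\mu_i}\cdot\vec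 P_{g,n}(\boldsymbol\mu)$ where, for $(g,n)\neq(0,1),(0,2)$, $\vec P_{g,n}$ is a symmetric polynomial with rational coefficients of degree $3g-3+n$. The variables are related by $x=\frac{z-1}{z^2}$ with $z=\frac{1-\sqrt{1-4x}}{2x}$ (so $z=1$ at $x=0$). Auxiliary functions: $f_a(z)=\sum_{\mu\ge1}\binom{2\mu}{\mu}\mu^ax^\mu=\big(-\frac{z(z-1)}{z-2}\frac{\partial}{\partial z}\big)^a\frac{2-2z}{z-2}$. *)

From HB Require Import structures.
From mathcomp Require Import all_boot all_order all_algebra all_fingroup.
From mathcomp Require Import all_classical all_reals all_analysis.

Set Implicit Arguments.
Unset Strict Implicit.
Unset Printing Implicit Defensive.

Import Order.TTheory GRing.Theory Num.Theory.
Import numFieldNormedType.Exports.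
Local Open Scope ring_scope.

Definition msize (n : nat) (mu : 'I_n -> nat) : nat := \sum_(i < n) mu i.

(* number of transpositions m = 2g - 2 + n + |mu| (n + |mu| >= 2 in all uses) *)
Definition mnum (g n : nat) (mu : 'I_n -> nat) : nat := (2 * g + n + msize mu - 2)%N.

(* m-tuples of transpositions sigma_j = (a_j b_j), encoded by the pairs
   (a_j, b_j) with a_j < b_j (a bijective encoding), with b_1 <= ... <= b_m. *)
Definition monotone_tuples (d m : nat) : {set {ffun 'I_m -> 'I_d * 'I_d}} :=
  [set s : {ffun 'I_m -> 'I_d * 'I_d} |
     [forall j, ((s j).1 < (s j).2)%N] &&
     [forall j : 'I_m, forall k : 'I_m, (j <= k)%N ==> ((s j).2 <= (s k).2)%N]].

Definition transp_of (d m : nat) (s : {ffun 'I_m -> 'I_d * 'I_d}) (j : 'I_m)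
  : {perm 'I_d} := tperm (s j).1 (s j).2.

(* sigma_1 o ... o sigma_m  (the cycle set does not depend on the
   composition convention, since reversing gives the inverse permutation) *)
Definition prod_transp (d m : nat) (s : {ffun 'I_m -> 'I_d * 'I_d}) : {perm 'I_d} :=
  (\prod_(j < m) transp_of s j)%g.

Definition transitive_tuple (d m : nat) (s : {ffun 'I_m -> 'I_d * 'I_d}) : bool :=
  [transitive <<[set transp_of s j | j : 'I_m]>>, on [set: 'I_d] | 'P].

Definition cycle_labellings (d n : nat) (mu : 'I_n -> nat) (p : {perm 'I_d})
  : {set {ffun 'I_n -> {set 'I_d}}} :=
  [set L : {ffun 'I_n -> {set 'I_d}} |
     [&& injectiveb L, [set L i | i : 'I_n] == porbits p &
         [forall i, #|L i| == mu i]]].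

Definition hurwitz_count (g n : nat) (mu : 'I_n -> nat) : nat :=
  let d := msize mu in
  let m := mnum g mu in
  \sum_(s in monotone_tuples d m | transitive_tuple s)
      #|cycle_labellings mu (prod_transp s)|.

Definition monotone_hurwitz (R : realType) (g n : nat) (mu : 'I_n -> nat) : R :=
  (hurwitz_count g mu)%:R / ((msize mu)`!)%:R.

(* ---------- Free energy: square partial sums of
   F_{g,n}(x) = sum_{mu_i >= 1} H_{g,n}(mu) prod x_i^{mu_i} ---------- *)
Definition free_energy_partial (R : realType) (g n : nat) (x : 'I_n -> R) (N : nat)
  : R :=
  \sum_(mu : {ffun 'I_n -> 'I_N} | [forall i, (0 < mu i)%N])
     monotone_hurwitz R g (fun i => nat_of_ord (mu i)) * \prod_(i < n) x i ^+ mu i.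

Definition x_of_z (R : realType) (z : R) : R := (z - 1) / z ^+ 2.

Fixpoint f_aux (R : realType) (a : nat) : R -> R :=
  match a with
  | 0 => fun z => (2 - 2 * z) / (z - 2)
  | a'.+1 => fun z => - (z * (z - 1) / (z - 2)) * derive1 (@f_aux R a') z
  end.

(* real z with 0 < z < 2 (the branch z = (1 - sqrt(1-4x))/(2x), z = 1 at x = 0)
   and |x| < 1/4, i.e. the region where the expansions converge *)
Definition z_region (R : realType) (z : R) : Prop :=
  0 < z < 2 /\ `| x_of_z z | < 4^-1.

(* Polynomiality writes the free energy as the finite combination
   sum_a C(a) prod_i F_{a_i}(x_i) of the one-variable series
   F_a(x) = sum_{m >= 1} binom(2m, m) m^a x^m, which converge for |x| < 1/4
   because binom(2m, m) <= 4^m.  The ODE (1 - 4x) F_0' = 2 (1 + F_0) makes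
   (1 + F_0(x)) sqrt(1 - 4x) constant, and sqrt(1 - 4x) = (2 - z)/z when
   x = (z - 1)/z^2, whence F_0(x(z)) = f_0(z); then F_{a+1} = x F_a' and the
   chain rule give F_a(x(z)) = f_a(z) for every a.  Finally
   f_a(z) = P_a(z)/(z - 2)^(2a+1) for explicit polynomials P_a; putting the sum
   over a common denominator and averaging it over the permutations of the
   variables (harmless, since Hurwitz numbers are symmetric) yields the
   symmetric rational function. *)

From HB Require Import structures.
From mathcomp Require Import all_boot all_order all_algebra all_fingroup.
From mathcomp Require Import all_classical all_reals all_analysis.
From mathcomp Require Import ring lra zify.

Set Implicit Arguments.
Unset Strict Implicit.
Unset Printing Implicit Defensive.

Import Order.TTheory GRing.Theory Num.Theory.
Import numFieldNormedType.Exports.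
Local Open Scope classical_set_scope.
Local Open Scope ring_scope.

Section ExpPolyBoundedSeries.
Variable R : realType.

Lemma bernoulli_ler (h : R) m : 0 <= h -> 1 + m%:R * h <= (1 + h) ^+ m.
Proof.
move=> h0; elim: m => [|m IH]; first by rewrite mul0r addr0 expr0.
rewrite exprS -natr1.
have : 0 <= m%:R * h * h by rewrite !mulr_ge0.
nra.
Qed.

Lemma natr_mul_exprn_le (w : R) m : 0 < w < 1 -> m%:R * w ^+ m <= w / (1 - w).
Proof.
move=> /andP[w0 w1].
have w'0 : 0 < 1 - w by rewrite subr_gt0.
have wm0 : 0 < w ^+ m by rewrite exprn_gt0.
have h0 : 0 <= (1 - w) / w by rewrite divr_ge0 ?ltW.
have := bernoulli_ler m h0.
have -> : 1 + (1 - w) / w = w^-1 by field; rewrite gt_eqF.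
rewrite exprVn -(ler_pM2r wm0) mulVf ?gt_eqF // => Hb.
rewrite ler_pdivlMr //; apply: le_trans (_ : w * 1 <= _); last by rewrite mulr1.
have -> : m%:R * w ^+ m * (1 - w) = w * (m%:R * ((1 - w) / w) * w ^+ m).
  by field; rewrite gt_eqF.
by rewrite ler_pM2l //; nra.
Qed.

Lemma poly_geometric_bounded p (q : R) : 0 <= q < 1 ->
  exists B, forall m, m.+1%:R ^+ p * q ^+ m <= B.
Proof.
elim: p q => [|p IH] q /andP[q0 q1].
  by exists 1 => m; rewrite expr0 mul1r exprn_ile1 // ltW.
pose w := (1 + q) / 2.
have w0 : 0 < w by rewrite divr_gt0 // ltr_pwDl.
have w1 : w < 1 by rewrite ltr_pdivrMr //; lra.
have qww : q <= w * w by rewrite /w; nra.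
have [B HB] := IH w (andb_true_intro (conj (ltW w0) w1)).
exists (B * (w / (1 - w) + 1)) => m.
have lin : m.+1%:R * w ^+ m <= w / (1 - w) + 1.
  rewrite -natr1 mulrDl mul1r lerD ?natr_mul_exprn_le ?w0 //.
  by rewrite exprn_ile1 // ltW.
have qm : q ^+ m <= w ^+ m * w ^+ m by rewrite -exprMn lerXn2r // nnegrE mulr_ge0 // ltW.
apply: le_trans (_ : m.+1%:R ^+ p * w ^+ m * (m.+1%:R * w ^+ m) <= _); last first.
  by apply: ler_pM => //; rewrite ?mulr_ge0 ?exprn_ge0 // ltW.
by rewrite exprS [_ * (_ * _)]mulrC -!mulrA ler_wpM2l // mulrCA ler_wpM2l.
Qed.

Lemma is_cvg_series_poly_geometric p (q : R) : 0 <= q < 1 ->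
  cvgn (series (fun m => m.+1%:R ^+ p * q ^+ m)).
Proof.
move=> /andP[q0 q1].
pose w := (1 + q) / 2.
have w0 : 0 < w by rewrite divr_gt0 // ltr_pwDl.
have w1 : w < 1 by rewrite ltr_pdivrMr //; lra.
have qw1 : q / w < 1 by rewrite ltr_pdivrMr // mul1r /w ltr_pdivlMr //; lra.
have [B HB] := poly_geometric_bounded p (andb_true_intro (conj (divr_ge0 q0 (ltW w0)) qw1)).
have B0 : 0 <= B by apply: le_trans (HB 0%N); rewrite !expr0 mulr1.
apply: (@series_le_cvg _ _ (geometric B w)).
- by move=> m; rewrite mulr_ge0 // exprn_ge0.
- by move=> m; rewrite /= mulr_ge0 // exprn_ge0 // ltW.
- move=> m; have -> : q ^+ m = (q / w) ^+ m * w ^+ m by rewrite -exprMn divfK // gt_eqF.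
  by rewrite /= mulrA ler_wpM2r // exprn_ge0 // ltW.
- by apply: is_cvg_geometric_series; rewrite ger0_norm // ltW.
Qed.

Definition exp_poly_bounded (r : R) (c : nat -> R) :=
  exists M p, forall m, `|c m| <= M * r ^+ m * m.+1%:R ^+ p.

Lemma is_cvg_pseries_exp_poly_bounded r c y : 0 <= r ->
  exp_poly_bounded r c -> r * `|y| < 1 -> cvgn (pseries c y).
Proof.
move=> r0 [M [p Hc]] ry1.
have M0 : 0 <= M by have := le_trans (normr_ge0 _) (Hc 0%N); rewrite expr0 expr1n !mulr1.
apply: normed_cvg.
apply: (@series_le_cvg _ _ (fun m => M * (m.+1%:R ^+ p * (r * `|y|) ^+ m))).
- by move=> m; exact: normr_ge0.
- by move=> m; rewrite mulr_ge0 // mulr_ge0 // exprn_ge0 // mulr_ge0.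
- move=> m; rewrite /= normrM normrX.
  rewrite [leRHS](_ : _ = M * r ^+ m * m.+1%:R ^+ p * `|y| ^+ m); last by rewrite exprMn; ring.
  by rewrite ler_wpM2r ?exprn_ge0.
- by apply: is_cvg_seriesZ; apply: is_cvg_series_poly_geometric; rewrite mulr_ge0.
Qed.

Lemma exp_poly_bounded_diffs r c : 0 <= r ->
  exp_poly_bounded r c -> exp_poly_bounded r (pseries_diffs c).
Proof.
move=> r0 [M [p Hc]].
have M0 : 0 <= M by have := le_trans (normr_ge0 _) (Hc 0%N); rewrite expr0 expr1n !mulr1.
exists (M * r * 2 ^+ p), p.+1 => m.
rewrite /pseries_diffs normrM ger0_norm //.
have Hm2 : m.+2%:R ^+ p <= 2 ^+ p * m.+1%:R ^+ p :> R.
  by rewrite -exprMn lerXn2r // ?nnegrE // -natrM ler_nat; lia.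
rewrite [leRHS](_ : _ = m.+1%:R * (M * r ^+ m.+1 * (2 ^+ p * m.+1%:R ^+ p))); last first.
  by rewrite !exprS; ring.
rewrite ler_wpM2l //; apply: le_trans (Hc m.+1) _.
by rewrite ler_wpM2l // mulr_ge0 // exprn_ge0.
Qed.

Lemma is_derive_pseries_exp_poly_bounded r c (x : R) : 0 < r ->
  exp_poly_bounded r c -> r * `|x| < 1 ->
  is_derive x (1 : R) (fun y => limn (pseries c y)) (limn (pseries (pseries_diffs c) x)).
Proof.
move=> r0 hc rx1; pose K := (`|x| + r^-1) / 2.
have xr : `|x| < r^-1 by rewrite -(ltr_pM2l r0) mulfV ?gt_eqF.
have K0 : 0 <= K by rewrite divr_ge0 // addr_ge0 // invr_ge0 ltW.
have xK : `|x| < `|K| by rewrite [`|K|]ger0_norm // /K ltr_pdivlMr //; lra.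
have rK : r * `|K| < 1.
  by rewrite [`|K|]ger0_norm // -(mulfV (lt0r_neq0 r0)) ltr_pM2l // /K ltr_pdivrMr //; lra.
have hc' := exp_poly_bounded_diffs (ltW r0) hc.
have hc'' := exp_poly_bounded_diffs (ltW r0) hc'.
by apply: pseries_snd_diffs xK; apply: is_cvg_pseries_exp_poly_bounded rK; rewrite ?ltW.
Qed.
End ExpPolyBoundedSeries.

Lemma bin_le_exp2 n k : ('C(n, k) <= 2 ^ n)%N.
Proof.
case: (leqP k n) => [kn|/bin_small-> //].
rewrite -[2%N]/(1 + 1)%N expnDn (bigD1 (Ordinal (kn : (k < n.+1)%N))) //=.
by rewrite !exp1n !muln1 leq_addr.
Qed.

Lemma mul_bin_double_rec m :
  (m.+1 * 'C(m.+1.*2, m.+1) = (m.*2.+1).*2 * 'C(m.*2, m))%N.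
Proof.
have sym : 'C(m.*2.+1, m) = 'C(m.*2.+1, m.+1).
  rewrite -[RHS]bin_sub; last by rewrite ltnS -addnn leq_addl.
  by congr 'C(_, _); rewrite -addnn; lia.
have := mul_bin_diag m.*2.+1 m; rewrite /= -sym doubleS binS -sym.
nia.
Qed.

(* No constant term: the free energy only involves mu_i >= 1 (and 0 ^ 0 = 1). *)
Definition fcoef (R : realType) (a m : nat) : R :=
  if m is 0 then 0 else ('C(m.*2, m))%:R * m%:R ^+ a.
Arguments fcoef : simpl never.

Section CentralBinomialSeries.
Variable R : realType.

Definition fseries a (x : R) := limn (pseries (fcoef R a) x).
Definition dfseries a (x : R) := limn (pseries (pseries_diffs (fcoef R a)) x).

Lemma exp_poly_bounded_fcoef a : exp_poly_bounded 4 (fcoef R a).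
Proof.
exists 1, a => -[|m]; first by rewrite normr0 mul1r expr0 mul1r exprn_ge0.
rewrite /fcoef normrM normrX !ger0_norm // mul1r.
apply: ler_pM; rewrite ?exprn_ge0 //.
  rewrite -natrX ler_nat (_ : 4 ^ m.+1 = 2 ^ m.+1.*2)%N ?bin_le_exp2 //.
  by rewrite -mul2n expnM.
by rewrite lerXn2r ?nnegrE // ler_nat.
Qed.

Lemma pseries_diffs_fcoef a : pseries_diffs (fcoef R a) = (fun m => fcoef R a.+1 m.+1).
Proof. by apply/funext => m; rewrite /pseries_diffs /fcoef exprS mulrCA. Qed.

Lemma is_cvg_fseries a (x : R) : `|x| < 4^-1 -> cvgn (pseries (fcoef R a) x).
Proof.
by move=> hx; apply: (is_cvg_pseries_exp_poly_bounded _ (exp_poly_bounded_fcoef a)); lra.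
Qed.

Lemma is_cvg_dfseries a (x : R) : `|x| < 4^-1 ->
  cvgn (pseries (pseries_diffs (fcoef R a)) x).
Proof.
have bounded := exp_poly_bounded_diffs (ler0n R 4) (exp_poly_bounded_fcoef a).
by move=> hx; apply: (is_cvg_pseries_exp_poly_bounded _ bounded); lra.
Qed.

Lemma is_derive_fseries a (x : R) : `|x| < 4^-1 ->
  is_derive x (1 : R) (fseries a) (dfseries a x).
Proof.
by move=> hx; apply: (is_derive_pseries_exp_poly_bounded _ (exp_poly_bounded_fcoef a)); lra.
Qed.

Lemma mul_dfseries a (x : R) : `|x| < 4^-1 -> x * dfseries a x = fseries a.+1 x.
Proof.
move=> hx.
have shift n : pseries (fcoef R a.+1) x n.+1 =
               x * pseries (pseries_diffs (fcoef R a)) x n.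
  rewrite /pseries /series /= big_nat_recl // mulr_sumr /= mul0r add0r.
  by apply: eq_bigr => k _; rewrite pseries_diffs_fcoef /= [x ^+ k.+1]exprS mulrCA.
have : pseries (fcoef R a.+1) x @ \oo --> x * dfseries a x.
  rewrite -cvg_shiftS (_ : [sequence _]_n = fun n => x * pseries (pseries_diffs (fcoef R a)) x n).
    by apply: cvgM; [exact: cvg_cst | exact: is_cvg_dfseries].
  by apply/funext => n; exact: shift.
by move=> L; rewrite /fseries (cvg_lim _ L).
Qed.

Lemma fseries_at0 a : fseries a 0 = 0.
Proof.
rewrite /fseries (_ : pseries _ _ = cst 0) ?lim_cst //.
apply/funext => n; rewrite /pseries /series /=; apply: big1 => -[|k] _ //=.
  by rewrite mul0r.
by rewrite expr0n mulr0.
Qed.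

Lemma fcoef_rec m : fcoef R 1 m.+2 - 4 * fcoef R 1 m.+1 = 2 * fcoef R 0 m.+1.
Proof.
have rec : m.+2%:R * ('C(m.+2.*2, m.+2))%:R
            = (4 * m.+1%:R + 2) * ('C(m.+1.*2, m.+1))%:R :> R.
  rewrite -!natrM mul_bin_double_rec natrM; congr (_ * _).
  by rewrite -!muln2 natrM -addn1 natrD natrM; ring.
by rewrite /fcoef !expr1 !expr0 !mulr1 mulrC rec; ring.
Qed.

Lemma fseries_ode_partial (x : R) n :
  pseries (pseries_diffs (fcoef R 0)) x n.+1
    - 4 * x * pseries (pseries_diffs (fcoef R 0)) x n
  = 2 + 2 * pseries (fcoef R 0) x n.+1.
Proof.
rewrite pseries_diffs_fcoef /pseries /series /=.
elim: n => [|n IH].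
  by rewrite !big_nat1 big_nil /fcoef /= (_ : 'C(1.*2, 1) = 2%N) // expr0; ring.
rewrite big_nat_recr //= [X in _ - 4 * x * X]big_nat_recr //= [in RHS]big_nat_recr //=.
have := fcoef_rec n; rewrite exprS; move: IH; nra.
Qed.

Lemma fseries_ode (x : R) : `|x| < 4^-1 ->
  (1 - 4 * x) * dfseries 0 x = 2 * (1 + fseries 0 x).
Proof.
move=> hx.
have dP := is_cvg_dfseries (a := 0) hx; have dQ := is_cvg_fseries (a := 0) hx.
have L1 : (fun n => pseries (pseries_diffs (fcoef R 0)) x n.+1
                    - 4 * x * pseries (pseries_diffs (fcoef R 0)) x n)
          @ \oo --> dfseries 0 x - 4 * x * dfseries 0 x.
  apply: cvgB; first by rewrite (cvg_shiftS (pseries _ x)).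
  by apply: cvgM => //; exact: cvg_cst.
have L2 : (fun n => 2 + 2 * pseries (fcoef R 0) x n.+1) @ \oo --> 2 + 2 * fseries 0 x.
  apply: cvgD; first exact: cvg_cst.
  by apply: cvgM; [exact: cvg_cst | rewrite (cvg_shiftS (pseries _ x))].
rewrite (funext (fseries_ode_partial x)) in L1.
have := cvg_unique (@Rhausdorff R) L1 L2; rewrite mulrBl mul1r => ->; ring.
Qed.
End CentralBinomialSeries.

Section ChangeOfVariable.
Variable R : realType.
Implicit Types z w u v : R.

Lemma is_derive_x_of_z z : z != 0 -> is_derive z (1 : R) (@x_of_z R) ((2 - z) / z ^+ 3).
Proof.
move=> z0.
have sq0 : (id ^+ 2 : R -> R) z != 0 by rewrite exprfctE expf_neq0.
have := is_deriveM (is_deriveB (is_derive_id z (1 : R)) (is_derive_cst (1 : R) z (1 : R)))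
                   (is_deriveV sq0 (is_deriveX 2 (is_derive_id z (1 : R)))).
rewrite (_ : _ * _ = @x_of_z R); last by apply/funext => w; rewrite /x_of_z /= exprfctE.
move=> d; apply: is_derive_eq d _.
by rewrite /= /GRing.scale /= exprfctE /= (_ : (id - cst 1) z = z - 1) //; field.
Qed.

Lemma continuous_x_of_z z : z != 0 -> (@x_of_z R) @ z --> x_of_z z.
Proof.
move=> z0; have [d _] := is_derive_x_of_z z0.
exact/differentiable_continuous/derivable1_diffP.
Qed.

Lemma x_of_z1 : x_of_z (1 : R) = 0.
Proof. by rewrite /x_of_z subrr mul0r. Qed.

Lemma x_of_z_le u v : 0 < u -> u <= v -> v < 2 -> x_of_z u <= x_of_z v.
Proof.
move=> u0 uv v2; have v0 : 0 < v := lt_le_trans u0 uv.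
rewrite -subr_ge0 (_ : _ - _ = (v - u) * (u + v - u * v) / (u ^+ 2 * v ^+ 2)).
  apply: divr_ge0; last by rewrite mulr_ge0 // exprn_ge0 // ltW.
  by apply: mulr_ge0; [rewrite subr_ge0 | nra].
by rewrite /x_of_z; field; rewrite !gt_eqF.
Qed.

Lemma z_region_x_of_z z : z_region z -> `|x_of_z z| < 4^-1.
Proof. by case. Qed.

Lemma z_region_neq0 z : z_region z -> z != 0.
Proof. by case=> /andP[z0 _] _; rewrite gt_eqF. Qed.

Lemma z_region_subr2_neq0 z : z_region z -> z - 2 != 0.
Proof. by case=> /andP[_ z2] _; rewrite subr_eq0 lt_eqF. Qed.

Lemma z_region_nbhs z : z_region z -> \forall w \near z, z_region w.
Proof.
move=> [/andP[z0 z2] hx].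
have hc : (fun w => `|x_of_z w|) @ z --> `|x_of_z z|.
  by apply: cvg_norm; apply: continuous_x_of_z; rewrite gt_eqF.
near=> w; split; last by near: w; apply: cvgr_lt hc _ hx.
by apply/andP; split; near: w; [apply: lt_nbhsr | apply: lt_nbhsl].
Unshelve. all: by end_near.
Qed.

(* As x_of_z increases on ]0, 2[ and vanishes at 1, |x_of_z| is monotone on
   each side of 1. *)
Lemma z_region_between z w : z_region z ->
  Num.min 1 z <= w <= Num.max 1 z -> z_region w.
Proof.
move=> [/andP[z0 z2] hx] /andP[].
have [z1|z1] := leP 1 z.
  move=> w1 wz.
  have w0 : 0 < w by lra.
  have w2 : w < 2 by lra.
  split; first by rewrite w0 w2.
  have := x_of_z_le ltr01 w1 w2; rewrite x_of_z1 => xw0.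
  by apply: le_lt_trans hx; rewrite !ger0_norm ?x_of_z_le // (le_trans xw0) ?x_of_z_le.
move=> zw w1.
have w0 : 0 < w by lra.
have w2 : w < 2 by lra.
split; first by rewrite w0 w2.
have := x_of_z_le w0 w1 (ltr1n R 2); rewrite x_of_z1 => xw0.
by apply: le_lt_trans hx; rewrite !ler0_norm ?lerN2 ?x_of_z_le // (le_trans _ xw0) ?x_of_z_le.
Qed.
End ChangeOfVariable.

Section AuxiliaryFunctionsAsSeries.
Variable R : realType.
Implicit Types z w : R.

Definition f0_first_integral z := (fseries 0 (x_of_z z) + 1) * ((2 - z) / z).

Lemma is_derive_f0_first_integral w : z_region w ->
  is_derive w (1 : R) f0_first_integral 0.
Proof.
move=> hw; have w0 := z_region_neq0 hw; have w2 := z_region_subr2_neq0 hw.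
have dF := is_derive1_comp (is_derive_fseries 0 (z_region_x_of_z hw)) (is_derive_x_of_z w0).
have dA := is_deriveD dF (is_derive_cst (1 : R) w (1 : R)).
have dB := is_deriveM (is_deriveB (is_derive_cst (2 : R) w (1 : R)) (is_derive_id w (1 : R)))
                      (is_deriveV (_ : (id : R -> R) w != 0) (is_derive_id w (1 : R))).
have := is_deriveM dA (dB w0).
rewrite (_ : _ * _ = f0_first_integral); last by apply/funext => y.
move=> d; apply: is_derive_eq d _.
have := fseries_ode (z_region_x_of_z hw).
set D := dfseries 0 (x_of_z w); set F := fseries 0 (x_of_z w) => ode.
have -> : D = 2 * (1 + F) * w ^+ 2 / (w - 2) ^+ 2.
  rewrite -ode /x_of_z; field; exact/andP.
rewrite /= /GRing.scale /=.
rewrite (_ : (fseries 0 \o x_of_z (R:=R) + cst 1) w = F + 1) //.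
rewrite (_ : (cst 2 - id : R -> R) w = 2 - w) //.
rewrite (_ : ((cst 2 - id) * [eta GRing.inv] : R -> R) w = (2 - w) / w) //.
by field; exact/andP.
Qed.

Lemma f0_first_integral1 : f0_first_integral 1 = 1.
Proof. by rewrite /f0_first_integral x_of_z1 fseries_at0 divr1; lra. Qed.

Lemma f0_first_integral_eq1 z : z_region z -> f0_first_integral z = 1.
Proof.
move=> hz; rewrite -f0_first_integral1.
suff seg a b : a <= b -> (forall y, a <= y <= b -> z_region y) ->
    f0_first_integral b = f0_first_integral a.
  have [z1|z1] := leP 1 z.
    apply: seg => // y hy; apply: (z_region_between hz).
    by rewrite (min_l z1) (max_r z1).
  apply/esym/seg => [|y hy]; first exact: ltW.
  by apply: (z_region_between hz); rewrite (min_r (ltW z1)) (max_l (ltW z1)).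
move=> ab hab.
have hd y : y \in `]a, b[ -> is_derive y (1 : R) f0_first_integral 0.
  by rewrite in_itv /= => /andP[ay yb]; apply/is_derive_f0_first_integral/hab; rewrite !ltW.
have hc : {within `[a, b], continuous f0_first_integral}.
  apply: continuous_in_subspaceT => y; rewrite inE /= in_itv /= => /hab hy.
  have [d _] := is_derive_f0_first_integral hy.
  exact/differentiable_continuous/derivable1_diffP.
have [c _] := MVT_segment ab hd hc.
by rewrite mul0r => /eqP; rewrite subr_eq0 => /eqP.
Qed.

Lemma f_aux0_fseries z : z_region z -> f_aux 0 z = fseries 0 (x_of_z z).
Proof.
move=> hz; have := f0_first_integral_eq1 hz; rewrite /f0_first_integral /=.
have z0 := z_region_neq0 hz; have z2 := z_region_subr2_neq0 hz.
have z2' : 2 - z != 0 by rewrite -opprB oppr_eq0.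
move/(congr1 (fun t => t * (z / (2 - z)))); rewrite mul1r => h.
rewrite (_ : fseries 0 (x_of_z z) = z / (2 - z) - 1); last by rewrite -h; field; exact/andP.
by field; exact/andP.
Qed.

Lemma f_aux_fseries a z : z_region z -> f_aux a z = fseries a (x_of_z z).
Proof.
elim: a z => [|a IH] z hz; first exact: f_aux0_fseries.
have z0 := z_region_neq0 hz; have z2 := z_region_subr2_neq0 hz.
rewrite /= derive1E.
have near_fa : \near z, f_aux a z = (fseries a \o @x_of_z R) z.
  by apply: filterS (z_region_nbhs hz) => w hw; rewrite IH.
rewrite (near_eq_derive _ near_fa).
have d := is_derive1_comp (is_derive_fseries a (z_region_x_of_z hz)) (is_derive_x_of_z z0).
rewrite derive_val -(mul_dfseries a (z_region_x_of_z hz)) /x_of_z.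
by field; exact/andP.
Qed.
End AuxiliaryFunctionsAsSeries.

Definition hurwitz_polynomiality (R : realType) (g n D : nat)
    (Cf : {ffun 'I_n -> 'I_D} -> R) : Prop :=
  forall mu : 'I_n -> nat, (forall i, (0 < mu i)%N) ->
    monotone_hurwitz R g mu =
      (\prod_(i < n) ('C((mu i).*2, mu i))%:R) *
      \sum_(a : {ffun 'I_n -> 'I_D}) Cf a * \prod_(i < n) ((mu i)%:R ^+ a i).

Section FreeEnergyLimit.
Variables (R : realType) (g n D : nat) (Cf : {ffun 'I_n -> 'I_D} -> R).
Hypothesis polyH : hurwitz_polynomiality g Cf.

Lemma prod_pseries_fcoef (a : 'I_n -> nat) (x : 'I_n -> R) N :
  \prod_(i < n) pseries (fcoef R (a i)) (x i) N =
  \sum_(mu : {ffun 'I_n -> 'I_N} | [forall i, (0 < mu i)%N])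
     \prod_(i < n) (fcoef R (a i) (mu i) * x i ^+ mu i).
Proof.
under eq_bigr do rewrite /pseries /series /= big_mkord.
rewrite bigA_distr_bigA (bigID (fun mu : {ffun 'I_n -> 'I_N} => [forall i, (0 < mu i)%N])) /=.
rewrite [X in _ + X]big1 ?addr0 // => mu /forallPn[i]; rewrite lt0n negbK => /eqP mui0.
by apply/eqP/prodf_eq0; exists i => //; rewrite mui0 /fcoef mul0r.
Qed.

Lemma free_energy_partialE (x : 'I_n -> R) N :
  free_energy_partial g x N =
  \sum_(a : {ffun 'I_n -> 'I_D}) Cf a * \prod_(i < n) pseries (fcoef R (a i)) (x i) N.
Proof.
under [RHS]eq_bigr do rewrite prod_pseries_fcoef mulr_sumr.
rewrite exchange_big /free_energy_partial; apply: eq_bigr => mu /forallP mu_gt0.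
rewrite polyH; last by move=> i; exact: mu_gt0.
rewrite mulr_sumr mulr_suml; apply: eq_bigr => a _.
rewrite [in RHS](eq_bigr (fun i => ('C((mu i : nat).*2, mu i))%:R * (mu i : nat)%:R ^+ a i
                           * x i ^+ mu i)); last first.
  by move=> i _; move: (mu_gt0 i); rewrite /fcoef; case: (nat_of_ord (mu i)).
by rewrite !big_split /=; ring.
Qed.

Lemma free_energy_cvg (z : 'I_n -> R) : (forall i, z_region (z i)) ->
  free_energy_partial g (fun i => x_of_z (z i)) N @[N --> \oo] -->
    \sum_(a : {ffun 'I_n -> 'I_D}) Cf a * \prod_(i < n) f_aux (a i) (z i).
Proof.
move=> hz; rewrite (funext (free_energy_partialE _)).
apply: (@cvg_big _ _ +%R 0 xpredT add_continuous) => a _.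
apply: cvgM; first exact: cvg_cst.
apply: (@cvg_big R _ *%R 1 xpredT (@mul_continuous R)) => i _.
rewrite f_aux_fseries //; exact: is_cvg_fseries (z_region_x_of_z (hz i)).
Qed.
End FreeEnergyLimit.

Section Relabelling.
Variables (n : nat) (s : 'S_n).

Lemma relabel_ffun_inj (T : finType) :
  injective (fun f : {ffun 'I_n -> T} => [ffun i => f (s i)]).
Proof.
move=> f1 f2 /ffunP eq12; apply/ffunP => i.
by have := eq12 (s^-1 i)%g; rewrite !ffunE permKV.
Qed.

Lemma msize_perm (mu : 'I_n -> nat) : msize (fun i => mu (s i)) = msize mu.
Proof. by rewrite /msize [RHS](reindex_inj (@perm_inj _ s)). Qed.
End Relabelling.
Arguments relabel_ffun_inj {n} s {T}.

Lemma card_cycle_labellings_perm_le d n (mu : 'I_n -> nat) (s : 'S_n) (p : {perm 'I_d}) :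
  (#|cycle_labellings mu p| <= #|cycle_labellings (fun i => mu (s i)) p|)%N.
Proof.
rewrite -(card_imset _ (relabel_ffun_inj s)); apply/subset_leq_card/fintype.subsetP.
move=> _ /imsetP[L + ->]; rewrite !inE => /and3P[/injectiveP Linj /eqP Lcyc /forallP Lsize].
apply/and3P; split.
- by apply/injectiveP => i j; rewrite !ffunE => /Linj /perm_inj.
- rewrite -Lcyc; apply/eqP/setP => X; apply/imsetP/imsetP => -[i _ ->].
    by exists (s i); rewrite ?ffunE.
  by exists (s^-1 i)%g; rewrite ?ffunE ?permKV.
- by apply/forallP => i; rewrite ffunE Lsize.
Qed.

Lemma card_cycle_labellings_perm d n (mu : 'I_n -> nat) (s : 'S_n) (p : {perm 'I_d}) :
  #|cycle_labellings (fun i => mu (s i)) p| = #|cycle_labellings mu p|.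
Proof.
apply/eqP; rewrite eqn_leq card_cycle_labellings_perm_le andbT.
have := card_cycle_labellings_perm_le (fun i => mu (s i)) (s^-1)%g p.
by rewrite (_ : (fun i => mu (s ((s^-1)%g i))) = mu) //; apply/funext => i; rewrite permKV.
Qed.

Lemma monotone_hurwitz_perm (R : realType) g n (mu : 'I_n -> nat) (s : 'S_n) :
  monotone_hurwitz R g (fun i => mu (s i)) = monotone_hurwitz R g mu.
Proof.
rewrite /monotone_hurwitz /hurwitz_count /mnum !msize_perm.
by congr (_%:R / _); apply: eq_bigr => t _; exact: card_cycle_labellings_perm.
Qed.

Lemma free_energy_partial_perm (R : realType) g n (x : 'I_n -> R) (s : 'S_n) N :
  free_energy_partial g (fun i => x (s i)) N = free_energy_partial g x N.
Proof.
rewrite /free_energy_partial [LHS](reindex_inj (relabel_ffun_inj s)).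
apply: eq_big => [nu|nu _].
  apply/forallP/forallP => nu_gt0 i; last by rewrite ffunE.
  by have := nu_gt0 (s^-1 i)%g; rewrite ffunE permKV.
rewrite (_ : (fun i => _) = (fun i => nat_of_ord (nu (s i)))); last first.
  by apply/funext => i; rewrite ffunE.
rewrite (monotone_hurwitz_perm R g (fun i => nat_of_ord (nu i)) s); congr (_ * _).
by rewrite [RHS](reindex_inj (@perm_inj _ s)); apply: eq_bigr => i _; rewrite ffunE.
Qed.

(* f_(a+1) = - z (z - 1)/(z - 2) * d/dz (P_a(z) / (z - 2)^(2a+1)). *)
Fixpoint fnumer (R : realType) (a : nat) : {poly R} :=
  if a is a'.+1 then
    - ('X * ('X - 1)) * ((fnumer R a')^`() * ('X - 2%:P) - (a'.*2.+1)%:R *: fnumer R a')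
  else 2%:P - 2%:P * 'X.

Section AuxiliaryFunctionsRational.
Variable R : realType.

Lemma subr2_neq0_nbhs (z : R) : z - 2 != 0 -> \forall w \near z, w - 2 != 0.
Proof.
rewrite subr_eq0 => z2; near=> w; rewrite subr_eq0; near: w.
case: (ltgtP z 2) z2 => // zlt2 _.
  by apply: filterS (lt_nbhsl zlt2) => w /lt_eqF ->.
by apply: filterS (lt_nbhsr zlt2) => w /gt_eqF ->.
Unshelve. all: by end_near.
Qed.

Lemma f_aux_fnumer a (z : R) : z - 2 != 0 ->
  f_aux a z = (fnumer R a).[z] / (z - 2) ^+ a.*2.+1.
Proof.
elim: a z => [|a IH] z z2; first by rewrite /= !hornerE expr1.
rewrite /= derive1E.
set k := a.*2.+1.
have near_fa : \near z, f_aux a z = (fun w => (fnumer R a).[w] / (w - 2) ^+ k) z.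
  by apply: filterS (subr2_neq0_nbhs z2) => w w2; rewrite IH.
rewrite (near_eq_derive _ near_fa).
have dpow := is_deriveX k (is_deriveB (is_derive_id z (1 : R)) (is_derive_cst (2 : R) z (1 : R))).
have pow0 : ((id - cst 2) ^+ k : R -> R) z != 0 by rewrite exprfctE expf_neq0.
have := is_deriveM (is_derive_poly (fnumer R a) z) (is_deriveV pow0 dpow).
rewrite (_ : _ * _ = fun w => (fnumer R a).[w] / (w - 2) ^+ k); last first.
  by apply/funext => w; rewrite /= exprfctE.
move=> d; rewrite derive_val [in X in _ * X = _]/GRing.scale /= !exprfctE.
rewrite (_ : (id - cst 2 : R -> R) z = z - 2) // !hornerE.
rewrite (_ : a.+1.*2.+1 = k + 2)%N; last by rewrite /k doubleS; lia.
rewrite /k !exprD /=.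
have t0 : (z - 2) ^+ a.*2 != 0 by rewrite expf_neq0.
by rewrite !exprS expr0 mulr1; field; apply/andP.
Qed.
End AuxiliaryFunctionsRational.

Section CommonDenominator.
Variables (R : realType) (n D : nat) (Cf : {ffun 'I_n -> 'I_D} -> R).

Definition fnumer_common (a : nat) : {poly R} :=
  fnumer R a * ('X - 2%:P) ^+ (D.*2.+1 - a.*2.+1).

Definition fnumer_size := (\sum_(a < D) size (fnumer_common a))%N.

Definition expansion_coef (e : {ffun 'I_n -> 'I_fnumer_size}) : R :=
  \sum_(a : {ffun 'I_n -> 'I_D}) Cf a * \prod_(i < n) (fnumer_common (a i))`_(e i).

Definition sym_expansion_coef (e : {ffun 'I_n -> 'I_fnumer_size}) : R :=
  (n`!%:R)^-1 * \sum_(s : 'S_n) expansion_coef [ffun i => e (s i)].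

Definition common_denom (z : 'I_n -> R) := \prod_(i < n) (z i - 2) ^+ D.*2.+1.

Definition fsum_common (z : 'I_n -> R) :=
  (\sum_(a : {ffun 'I_n -> 'I_D}) Cf a * \prod_(i < n) (fnumer_common (a i)).[z i])
  / common_denom z.

Definition sym_ratf (z : 'I_n -> R) :=
  (\sum_(e : {ffun 'I_n -> 'I_fnumer_size}) sym_expansion_coef e * \prod_(i < n) z i ^+ e i)
  / common_denom z.

Lemma fnumer_commonE (a : 'I_D) (z : R) : z - 2 != 0 ->
  (fnumer_common a).[z] / (z - 2) ^+ D.*2.+1 = (fnumer R a).[z] / (z - 2) ^+ (a : nat).*2.+1.
Proof.
move=> z2; rewrite hornerM horner_exp !hornerE.
have aD : ((a : nat).*2.+1 <= D.*2.+1)%N by rewrite ltnS leq_double ltnW.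
rewrite -{2}(subnK aD) exprD.
have e1 : (z - 2) ^+ (D.*2.+1 - (a : nat).*2.+1) != 0 by rewrite expf_neq0.
have e2 : (z - 2) ^+ (a : nat).*2.+1 != 0 by rewrite expf_neq0.
by field; apply/andP.
Qed.

Lemma size_fnumer_common (a : 'I_D) : (size (fnumer_common a) <= fnumer_size)%N.
Proof. by rewrite /fnumer_size (bigD1 a) //= leq_addr. Qed.

Lemma sum_expansion_coef (z : 'I_n -> R) :
  \sum_e expansion_coef e * \prod_(i < n) z i ^+ e i =
  \sum_(a : {ffun 'I_n -> 'I_D}) Cf a * \prod_(i < n) (fnumer_common (a i)).[z i].
Proof.
have expand (a : {ffun 'I_n -> 'I_D}) : \prod_(i < n) (fnumer_common (a i)).[z i] =
    \sum_(e : {ffun 'I_n -> 'I_fnumer_size})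
      \prod_(i < n) ((fnumer_common (a i))`_(e i) * z i ^+ e i).
  rewrite (eq_bigr _ (fun i _ => horner_coef_wide (z i) (size_fnumer_common (a i)))).
  exact: bigA_distr_bigA.
under [RHS]eq_bigr do rewrite expand mulr_sumr.
rewrite exchange_big; apply: eq_bigr => e _.
rewrite /expansion_coef mulr_suml; apply: eq_bigr => a _.
by rewrite big_split mulrA.
Qed.

Lemma sum_expansion_coef_perm (s : 'S_n) (z : 'I_n -> R) :
  \sum_(e : {ffun 'I_n -> 'I_fnumer_size})
     expansion_coef [ffun i => e (s i)] * \prod_(i < n) z i ^+ e i =
  \sum_e expansion_coef e * \prod_(i < n) z (s i) ^+ e i.
Proof.
rewrite [RHS](reindex_inj (relabel_ffun_inj s)); apply: eq_bigr => e _.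
congr (_ * _); rewrite [LHS](reindex_inj (@perm_inj _ s)).
by apply: eq_bigr => i _; rewrite ffunE.
Qed.

Lemma common_denom_perm (s : 'S_n) (z : 'I_n -> R) :
  common_denom (fun i => z (s i)) = common_denom z.
Proof. by rewrite /common_denom [RHS](reindex_inj (@perm_inj _ s)). Qed.

Lemma sym_ratfE (z : 'I_n -> R) :
  sym_ratf z = (n`!%:R)^-1 * \sum_(s : 'S_n) fsum_common (fun i => z (s i)).
Proof.
rewrite /sym_ratf; under eq_bigr do rewrite /sym_expansion_coef -mulrA mulr_suml.
rewrite -mulr_sumr exchange_big /= -mulrA mulr_suml; congr (_ * _).
apply: eq_bigr => s _.
by rewrite sum_expansion_coef_perm sum_expansion_coef /fsum_common common_denom_perm.
Qed.

Lemma sym_ratf_perm (z : 'I_n -> R) (t : 'S_n) :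
  sym_ratf (fun i => z (t i)) = sym_ratf z.
Proof.
rewrite !sym_ratfE; congr (_ * _).
rewrite [RHS](reindex_inj (@mulIg _ t)); apply: eq_bigr => s _.
by congr fsum_common; apply/funext => i; rewrite permM.
Qed.

Lemma fsum_commonE (z : 'I_n -> R) : (forall i, z i - 2 != 0) ->
  fsum_common z = \sum_(a : {ffun 'I_n -> 'I_D}) Cf a * \prod_(i < n) f_aux (a i) (z i).
Proof.
move=> z2; rewrite /fsum_common /common_denom mulr_suml; apply: eq_bigr => a _.
rewrite -mulrA -prodf_div; congr (_ * _); apply: eq_bigr => i _.
by rewrite fnumer_commonE // f_aux_fnumer.
Qed.
End CommonDenominator.

Section SymmetricRationalLimit.
Variables (R : realType) (g n D : nat) (Cf : {ffun 'I_n -> 'I_D} -> R).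
Hypothesis polyH : hurwitz_polynomiality g Cf.

Lemma fsum_common_perm (z : 'I_n -> R) (s : 'S_n) : (forall i, z_region (z i)) ->
  fsum_common Cf (fun i => z (s i)) =
  \sum_(a : {ffun 'I_n -> 'I_D}) Cf a * \prod_(i < n) f_aux (a i) (z i).
Proof.
move=> hz; have hzs i : z_region (z (s i)) by [].
rewrite fsum_commonE => [|i]; last exact: z_region_subr2_neq0.
have := free_energy_cvg polyH hzs.
under eq_fun do rewrite (free_energy_partial_perm g (fun i => x_of_z (z i)) s).
by move/(cvg_unique (@Rhausdorff R) (free_energy_cvg polyH hz)).
Qed.

Lemma free_energy_cvg_sym_ratf (z : 'I_n -> R) : (forall i, z_region (z i)) ->
  free_energy_partial g (fun i => x_of_z (z i)) N @[N --> \oo] --> sym_ratf Cf z.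
Proof.
move=> hz; rewrite sym_ratfE (eq_bigr _ (fun s _ => fsum_common_perm s hz)).
rewrite sumr_const (_ : #|_| = n`!); last by rewrite -card_Sn; exact: eq_card.
rewrite -[in X in _ * X]mulr_natl mulrA mulVf ?mul1r; first exact: free_energy_cvg.
by rewrite pnatr_eq0 -lt0n fact_gt0.
Qed.
End SymmetricRationalLimit.

Theorem corollary2p9 (R : realType) (g n : nat) (D : nat)
    (C : {ffun 'I_n -> 'I_D} -> rat) :
  (1 <= n)%N ->
  ~ (g = 0%N /\ (n <= 2)%N) ->
  (* polynomiality: H_{g,n}(mu) = prod_i binom(2mu_i, mu_i) * P_{g,n}(mu),
     P_{g,n}(mu) = sum_a C_{g,n}(a) mu_1^{a_1} ... mu_n^{a_n} *)
  (forall mu : 'I_n -> nat, (forall i, (0 < mu i)%N) ->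
     monotone_hurwitz R g mu =
       (\prod_(i < n) ('C((mu i).*2, mu i))%:R) *
       \sum_(a : {ffun 'I_n -> 'I_D}) ratr (C a) * \prod_(i < n) ((mu i)%:R ^+ a i)) ->
  (* F_{g,n} = sum_a C_{g,n}(a) prod_i f_{a_i}(z_i), with x_i = (z_i - 1)/z_i^2 *)
  (forall z : 'I_n -> R, (forall i, z_region (z i)) ->
     @free_energy_partial R g n (fun i => x_of_z (z i)) N @[N --> \oo] -->
       \sum_(a : {ffun 'I_n -> 'I_D}) ratr (C a) * \prod_(i < n) @f_aux R (a i) (z i))
  /\
  (* in particular, F_{g,n} is a symmetric rational function of z_1..z_n
     with poles only at z_i = 2 *)
  (exists (K k : nat) (c : {ffun 'I_n -> 'I_K} -> R),
     let ratf := fun z : 'I_n -> R =>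
       (\sum_(e : {ffun 'I_n -> 'I_K}) c e * \prod_(i < n) z i ^+ e i) /
       \prod_(i < n) (z i - 2) ^+ k in
     (forall z : 'I_n -> R, (forall i, z_region (z i)) ->
        @free_energy_partial R g n (fun i => x_of_z (z i)) N @[N --> \oo] --> ratf z)
     /\
     (forall (z : 'I_n -> R) (s : 'S_n), (forall i, z i != 2) ->
        ratf (fun i => z (s i)) = ratf z)).
Proof.
move=> _ _ polyH; pose Cf a : R := ratr (C a).
split; first by move=> z; exact: (free_energy_cvg (Cf := Cf)).
exists (fnumer_size R D), D.*2.+1, (sym_expansion_coef Cf); split.
- by move=> z; exact: (free_energy_cvg_sym_ratf (Cf := Cf)).
- by move=> z s _; exact: sym_ratf_perm.
Qed.
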